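(* Let $\Sigma = (|\Sigma|, (\sigma^\alpha, M^\alpha)_\alpha)$ be a cone complex with integral structure, $N^\alpha=(M^\alpha)^\vee$, let $N$ be a lattice, and let $\varphi: |\Sigma| \to N_\mathbf{R}$ be a map whose restriction to each $\sigma^\alpha$ is induced by a map of lattices $N^\alpha \to N$. If $\sigma$ is a cone in $N$, $\Sigma'$ is a subdivision of $\Sigma$, and $\Sigma$ has $\sigma$-compatible geometric tropicalization with respect to $\varphi$, then $\Sigma'$ has $\sigma$-compatible geometric tropicalization with respect to $\varphi$.
   Context: Cones are rational polyhedral pointed cones. A cone complex with integral structure (in the sense of Kempf–Knudsen–Mumford–Saint-Donat) is a topological space $|\Sigma|$ that is a union of cones $\sigma^\alpha\subset N^\alpha_\mathbf{R}$ (each with integral structure from a lattice $M^\alpha$ of linear functions) glued along faces compatibly with integral structures. A subdivision $\Sigma'$ of $\Sigma$ is a cone complex with integral structure with $|\Sigma'|=|\Sigma|$ such that each cone of $\Sigma'$ is contained in a cone of $\Sigma$ with compatible integral structure and each cone of $\Sigma$ is a union of cones of $\Sigma'$. $\Sigma$ has $\sigma$-compatible geometric tropicalization with respect to $\varphi$ if for each index $\alpha$, $\varphi^{-1}(\sigma)\cap\sigma^\alpha$ is a face of $\sigma^\alpha$. *)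

From HB Require Import structures.
From mathcomp Require Import all_boot all_order all_algebra.
From mathcomp Require Import all_classical all_reals topology normedtype matrix_topology.
Set Implicit Arguments. Unset Strict Implicit. Unset Printing Implicit Defensive.
Import Order.TTheory GRing.Theory Num.Theory.
Import numFieldNormedType.Exports.
Local Open Scope classical_set_scope.
Local Open Scope ring_scope.

Section ConeComplexes.
Variable R : realType.

(* The lattice N^alpha is Z^n inside N^alpha_R = R^n (row vectors);
   M^alpha = (Z^n)^vee acts through the standard pairing. *)
Definition dotv n (u x : 'rV[R]_n) : R := \sum_(i < n) u 0 i * x 0 i.

Definition intv n (z : 'rV[int]_n) : 'rV[R]_n := map_mx (fun k : int => k%:~R) z.
Definition intm m n (z : 'M[int]_(m, n)) : 'M[R]_(m, n) :=
  map_mx (fun k : int => k%:~R) z.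

Definition cone_gen n (s : seq 'rV[R]_n) : set 'rV[R]_n :=
  [set x | exists c : 'I_(size s) -> R,
     (forall i, 0 <= c i) /\ x = \sum_(i < size s) c i *: s`_i].

Definition rpp_cone n (sigma : set 'rV[R]_n) : Prop :=
  (exists s : seq 'rV[int]_n, sigma = cone_gen (map (@intv n) s)) /\
  (forall x, sigma x -> sigma (- x) -> x = 0).

Definition is_face n (sigma F : set 'rV[R]_n) : Prop :=
  exists u : 'rV[R]_n, (forall x, sigma x -> 0 <= dotv u x) /\
    F = sigma `&` [set x | dotv u x = 0].

Variable X : topologicalType.

(* a cone sigma in R^n together with its identification with a subset of X *)
Record emb_cone := EmbCone {
  ec_dim : nat;
  ec_set : set 'rV[R]_ec_dim;
  ec_map : 'rV[R]_ec_dim -> X }.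
Arguments ec_set : clear implicits.
Arguments ec_map : clear implicits.

Definition ec_img (c : emb_cone) : set X := ec_map c @` ec_set c.

(* the lattice M of integral linear functions on the cone, viewed as
   (germs of) functions on its image in X *)
Definition ec_intf (c : emb_cone) : set (X -> R) :=
  [set f | exists u : 'rV[int]_(ec_dim c),
     forall x, ec_set c x -> f (ec_map c x) = dotv (intv u) x].

Definition compat_on (c c' : emb_cone) (S : set X) : Prop :=
  (forall f, ec_intf c f -> exists g, ec_intf c' g /\ forall p, S p -> f p = g p) /\
  (forall g, ec_intf c' g -> exists f, ec_intf c f /\ forall p, S p -> f p = g p).

(* Cone complex with integral structure (Kempf-Knudsen-Mumford-Saint-Donat)
   with underlying space |Sigma| = X. *)
Record cone_complex := ConeComplex {
  cc_index : Type;
  cc_cone : cc_index -> emb_cone;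
  cc_rpp : forall a, rpp_cone (ec_set (cc_cone a));
  cc_inj : forall a, {in ec_set (cc_cone a) &, injective (ec_map (cc_cone a))};
  cc_cont : forall a, {within ec_set (cc_cone a), continuous (ec_map (cc_cone a))};
  cc_weak : forall A : set X, closed A <->
      (forall a, closed (ec_set (cc_cone a) `&` ec_map (cc_cone a) @^-1` A));
  cc_cover : forall p : X, exists a, ec_img (cc_cone a) p;
  cc_glue : forall a b,
      ec_img (cc_cone a) `&` ec_img (cc_cone b) = set0 \/ exists F G,
      is_face (ec_set (cc_cone a)) F /\ is_face (ec_set (cc_cone b)) G /\
      ec_map (cc_cone a) @` F = ec_img (cc_cone a) `&` ec_img (cc_cone b) /\
      ec_map (cc_cone b) @` G = ec_img (cc_cone a) `&` ec_img (cc_cone b) /\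
      compat_on (cc_cone a) (cc_cone b) (ec_img (cc_cone a) `&` ec_img (cc_cone b))
}.

Arguments cc_cone : clear implicits.

Definition subdivision (Sigma' Sigma : cone_complex) : Prop :=
  (forall b : cc_index Sigma', exists a : cc_index Sigma,
      ec_img (cc_cone Sigma' b) `<=` ec_img (cc_cone Sigma a) /\
      compat_on (cc_cone Sigma' b) (cc_cone Sigma a) (ec_img (cc_cone Sigma' b))) /\
  (forall a : cc_index Sigma, exists B : set (cc_index Sigma'),
      ec_img (cc_cone Sigma a) = \bigcup_(b in B) ec_img (cc_cone Sigma' b)).

Definition lattice_induced (Sigma : cone_complex) d (phi : X -> 'rV[R]_d) : Prop :=
  forall a, exists L : 'M[int]_(ec_dim (cc_cone Sigma a), d),
    forall x, ec_set (cc_cone Sigma a) x -> phi (ec_map (cc_cone Sigma a) x) = x *m intm L.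

Definition compat_geom_trop (Sigma : cone_complex) d (phi : X -> 'rV[R]_d)
    (sigma : set 'rV[R]_d) : Prop :=
  forall a, is_face (ec_set (cc_cone Sigma a))
    (ec_set (cc_cone Sigma a) `&` ec_map (cc_cone Sigma a) @^-1` (phi @^-1` sigma)).

End ConeComplexes.

Arguments lattice_induced {R X} Sigma {d} phi.
Arguments compat_geom_trop {R X} Sigma {d} phi sigma.
Arguments subdivision {R X} Sigma' Sigma.

(* A subdivision cone tau of Sigma' sits in some cone sigma^alpha of Sigma with
   compatible integral structure, so each coordinate of sigma^alpha restricts
   to an integral linear function on tau: the inclusion tau -> sigma^alpha is
   linear.  The preimage of a face under a linear map into a cone is a face
   (pull back the defining functional), and the preimage of sigma in tau is the
   preimage of the face phi^-1(sigma) of sigma^alpha. *)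
From HB Require Import structures.
From mathcomp Require Import all_boot all_order all_algebra.
From mathcomp Require Import all_classical all_reals topology normedtype matrix_topology.
Set Implicit Arguments. Unset Strict Implicit. Unset Printing Implicit Defensive.
Import Order.TTheory GRing.Theory Num.Theory.
Import numFieldNormedType.Exports.
Local Open Scope classical_set_scope.
Local Open Scope ring_scope.

Local Notation eset c := (@ec_set _ _ c).
Local Notation emap c := (@ec_map _ _ c).
Local Notation cone S a := (@cc_cone _ _ S a).

Section LinearAlgebra.
Variable R : realType.

Lemma dotvE n (u x : 'rV[R]_n) : dotv u x = (u *m x^T) 0 0.
Proof. by rewrite /dotv mxE; apply: eq_bigr => i _; rewrite mxE. Qed.

Lemma dotv_mulmx m n (u : 'rV[R]_n) (y : 'rV[R]_m) (T : 'M[R]_(m, n)) :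
  dotv u (y *m T) = dotv (u *m T^T) y.
Proof. by rewrite !dotvE trmx_mul mulmxA. Qed.

Lemma dotv_delta n (i : 'I_n) (x : 'rV[R]_n) :
  dotv (intv R (delta_mx 0 i)) x = x 0 i.
Proof.
rewrite /dotv (bigD1 i) //= big1 ?addr0; first by rewrite !mxE !eqxx mul1r.
by move=> j /negPf ji; rewrite !mxE ji andbF mul0r.
Qed.

Lemma is_face_linear_preimage m n (A : set 'rV[R]_n) (B : set 'rV[R]_m)
    (T : 'M[R]_(m, n)) (P : set 'rV[R]_n) :
  (forall y, B y -> A (y *m T)) -> is_face A (A `&` P) ->
  is_face B (B `&` [set y | P (y *m T)]).
Proof.
move=> BA [u [u_ge0 AP]].
have P_dotv x : A x -> P x <-> dotv u x = 0.
  move=> Ax; split=> [Px | ux0].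
    by have [] : (A `&` [set x | dotv u x = 0]) x by rewrite -AP.
  by have [] : (A `&` P) x by rewrite AP.
exists (u *m T^T); split=> [y By|]; first by rewrite -dotv_mulmx; apply/u_ge0/BA.
apply/seteqP; split=> y [By Py]; split=> //=.
  by rewrite -dotv_mulmx; apply/(P_dotv _ (BA _ By)).
by apply/(P_dotv _ (BA _ By)); rewrite dotv_mulmx.
Qed.

End LinearAlgebra.

Section EmbeddedCones.
Variables (R : realType) (X : topologicalType).
Implicit Types c : emb_cone R X.

Lemma ec_intf_coord c (i : 'I_(ec_dim c)) :
  {in eset c &, injective (emap c)} ->
  exists f, ec_intf c f /\ forall x, eset c x -> f (emap c x) = x 0 i.
Proof.
move=> map_inj.
pose pre p := xget 0 [set x | eset c x /\ emap c x = p].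
have preK x : eset c x -> pre (emap c x) = x.
  move=> cx; have [cpre mapK] : eset c (pre (emap c x)) /\
      emap c (pre (emap c x)) = emap c x.
    by apply: (xgetPex 0 (P := [set y | eset c y /\ emap c y = emap c x])); exists x.
  by apply: map_inj; rewrite ?inE.
exists (fun p => pre p 0 i); split; last by move=> x cx; rewrite preK.
by exists (delta_mx 0 i) => x cx; rewrite preK // dotv_delta.
Qed.

Lemma subcone_linear c c' :
  {in eset c &, injective (emap c)} ->
  ec_img c' `<=` ec_img c -> compat_on c' c (ec_img c') ->
  exists T : 'M[R]_(ec_dim c', ec_dim c), forall y, eset c' y ->
    eset c (y *m T) /\ emap c (y *m T) = emap c' y.
Proof.
move=> map_inj c'c [_ intf_c'c].
have coord_c' i : exists v : 'rV[int]_(ec_dim c'), forall x y,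
    eset c x -> eset c' y -> emap c x = emap c' y ->
    x 0 i = dotv (intv R v) y.
  have [f [cf fE]] := ec_intf_coord i map_inj.
  have [g [[v gE] fg]] := intf_c'c f cf.
  exists v => x y cx c'y xy.
  by rewrite -fE // -gE // xy fg //; exists y.
have [v vE] := choice coord_c'.
exists (\matrix_(j, i) intv R (v i) 0 j) => y c'y.
have [x cx xy] := c'c _ (ex_intro2 _ _ y c'y erefl).
suff -> : y *m \matrix_(j, i) intv R (v i) 0 j = x by [].
apply/rowP => i; rewrite (vE i x y) // mxE /dotv.
by apply: eq_bigr => j _; rewrite mxE mulrC.
Qed.

End EmbeddedCones.

Theorem lemma5p9 (R : realType) (X : topologicalType)
    (Sigma Sigma' : cone_complex R X) (d : nat) (phi : X -> 'rV[R]_d)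
    (sigma : set 'rV[R]_d) :
  lattice_induced Sigma phi ->
  rpp_cone sigma ->
  subdivision Sigma' Sigma ->
  compat_geom_trop Sigma phi sigma ->
  compat_geom_trop Sigma' phi sigma.
Proof.
move=> _ _ [sub_cone _] face_a b.
have [a [ba compat_ba]] := sub_cone b.
have [T T_incl] := subcone_linear (@cc_inj _ _ Sigma a) ba compat_ba.
have -> : eset (cone Sigma' b) `&`
    emap (cone Sigma' b) @^-1` (phi @^-1` sigma) =
    eset (cone Sigma' b) `&`
    [set y | (emap (cone Sigma a) @^-1` (phi @^-1` sigma)) (y *m T)].
  by apply/seteqP; split=> y [b_y]; have [_ /= ->] := T_incl y b_y.
by apply: is_face_linear_preimage (face_a a) => y /T_incl[].
Qed.
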